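(* Let $\mathbf{L}\in\{\mathbf{K}_D,\mathbf{KD}_D,\mathbf{KT}_D\}$ and let $\Gamma\Rightarrow\Delta$ be a sequent. If $\Gamma\Rightarrow\Delta$ is valid in every finite model of the class $\mathbb{M}_{\mathbf{L}}$ (where $\mathbb{M}_{\mathbf{K}_D}=\mathbb{M}$, $\mathbb{M}_{\mathbf{KD}_D}=\mathbb{M}_{\mathbf{ser}}$, $\mathbb{M}_{\mathbf{KT}_D}=\mathbb{M}_{\mathbf{ref}}$), then $\mathsf{G}(\mathbf{L})\vdash\Gamma\Rightarrow\Delta$.
   Context: Language: fix a finite nonempty set $\mathsf{Agt}$ of agents and a countable set $\mathsf{Prop}$ of propositional variables; $\mathsf{Grp}$ is the set of nonempty subsets of $\mathsf{Agt}$. Formulas: $\alpha::=p\mid\bot\mid\alpha\wedge\alpha\mid\alpha\vee\alpha\mid\alpha\rightarrow\alpha\mid\neg\alpha\mid D_G\alpha$ ($p\in\mathsf{Prop}$, $G\in\mathsf{Grp}$). Outmost-boxed formula: one of the form $D_G\gamma$. Semantics: a model $M=(W,(R_G)_{G\in\mathsf{Grp}},V)$ has a set $W$ of states, binary relations $R_G$ on $W$ with $R_H\subseteq R_G$ whenever $G\subseteq H$, and $V:\mathsf{Prop}\to\mathcal P(W)$; it is finite if $W$ is finite. Truth is classical for connectives and $M,w\models D_G\alpha$ iff $M,v\models\alpha$ for all $v$ with $(w,v)\in R_G$. $\mathbb{M}$: all models; $\mathbb{M}_{\mathbf{ser}}$: models with $R_{\{a\}}$ serial for every $a\in\mathsf{Agt}$;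 $\mathbb{M}_{\mathbf{ref}}$: models with every $R_G$ reflexive. A sequent $\Gamma\Rightarrow\Delta$ is valid in a class if $\bigwedge\Gamma\rightarrow\bigvee\Delta$ is true at every state of every model in it (empty conjunction $\top$, empty disjunction $\bot$). Sequent calculi (sequents $\Gamma\Rightarrow\Delta$ are pairs of finite multisets; derivable = root of a finite tree built from initial sequents by rules): $\mathsf{G}(\mathbf{K}_D)$ has initial sequents $\Gamma,p\Rightarrow p,\Delta$ and $\bot,\Gamma\Rightarrow\Delta$; rules $(R\wedge)$ from $\Gamma\Rightarrow\Delta,\alpha_1$ and $\Gamma\Rightarrow\Delta,\alpha_2$ infer $\Gamma\Rightarrow\Delta,\alpha_1\wedge\alpha_2$; $(L\wedge)$ from $\alpha_1,\alpha_2,\Gamma\Rightarrow\Delta$ infer $\alpha_1\wedge\alpha_2,\Gamma\Rightarrow\Delta$; $(R\vee)$ from $\Gamma\Rightarrow\Delta,\alpha_1,\alpha_2$ infer $\Gamma\Rightarrow\Delta,\alpha_1\vee\alpha_2$; $(L\vee)$ from $\alpha_1,\Gamma\Rightarrow\Delta$ and $\alpha_2,\Gamma\Rightarrow\Delta$ infer $\alpha_1\vee\alpha_2,\Gamma\Rightarrow\Delta$; $(R\rightarrow)$ from $\alpha_1,\Gamma\Rightarrow\Delta,\alpha_2$ infer $\Gamma\Rightarrow\Delta,\alpha_1\rightarrow\alpha_2$; $(L\rightarrow)$ from $\Gamma\Rightarrow\Delta,\alpha_1$ and $\alpha_2,\Gamma\Rightarrow\Delta$ infer $\alpha_1\rightarrow\alpha_2,\Gamma\Rightarrow\Delta$;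 $(R\neg)$ from $\alpha,\Gamma\Rightarrow\Delta$ infer $\Gamma\Rightarrow\Delta,\neg\alpha$; $(L\neg)$ from $\Gamma\Rightarrow\Delta,\alpha$ infer $\neg\alpha,\Gamma\Rightarrow\Delta$; $(D_K)$: from $\alpha_1,\dots,\alpha_n\Rightarrow\beta$ ($n\ge0$) infer $\Sigma,D_{G_1}\alpha_1,\dots,D_{G_n}\alpha_n\Rightarrow D_G\beta,\Omega$ where all $G_i\subseteq G$, $\Sigma$ consists only of propositional variables, $\bot$, and $D_H\gamma$ with $H\not\subseteq G$, and $\Omega$ only of propositional variables, $\bot$, outmost-boxed formulas. $\mathsf{G}(\mathbf{KD}_D)$ adds $(D_D)$: from $\Gamma\Rightarrow$ with $\Gamma\neq\emptyset$ infer $\Sigma,D_{\{a\}}\Gamma\Rightarrow\Omega$, $\Sigma$ only propositional variables, $\bot$, $D_H\gamma$ with $H\neq\{a\}$; $\Omega$ only propositional variables, $\bot$, outmost-boxed formulas. $\mathsf{G}(\mathbf{KT}_D)$ adds to $\mathsf{G}(\mathbf{K}_D)$ $(D_T)$: from $D_G\alpha,\alpha,\Gamma\Rightarrow\Delta$ infer $D_G\alpha,\Gamma\Rightarrow\Delta$. *)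

From mathcomp Require Import all_boot.
From Stdlib Require Import List Permutation.
Set Implicit Arguments. Unset Strict Implicit. Unset Printing Implicit Defensive.

Section Defs.
Variable Agt : finType.

Definition Grp := {G : {set Agt} | G != set0}.

Inductive form : Type :=
| Var : nat -> form
| Bot : form
| And : form -> form -> form
| Or  : form -> form -> form
| Imp : form -> form -> form
| Neg : form -> form
| Box : Grp -> form -> form.

Lemma set1_nonempty (a : Agt) : [set a] != set0.
Proof. by apply/set0Pn; exists a; rewrite in_set1. Qed.

Definition sgrp (a : Agt) : Grp := exist _ [set a] (set1_nonempty a).

Definition subgrp (G H : Grp) : bool := val G \subset val H.

Definition sigmaK (G : Grp) (f : form) : Prop :=
  match f with
  | Var _ | Bot => True
  | Box H _ => ~~ subgrp H G
  | _ => False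
  end.

Definition sigmaD (a : Agt) (f : form) : Prop :=
  match f with
  | Var _ | Bot => True
  | Box H _ => val H <> [set a]
  | _ => False
  end.

Definition omegaOK (f : form) : Prop :=
  match f with
  | Var _ | Bot | Box _ _ => True
  | _ => False
  end.

Inductive logic : Type := LK | LKD | LKT.

(* Sequents are pairs of finite multisets, represented as lists modulo
   permutation (rule [d_perm]). *)
Inductive derivable (L : logic) : list form -> list form -> Prop :=
| d_perm G D G' D' : derivable L G D -> Permutation G G' -> Permutation D D' ->
    derivable L G' D'
| d_id p G D : derivable L (Var p :: G) (Var p :: D)
| d_bot G D : derivable L (Bot :: G) D
| d_Rand G D a b : derivable L G (a :: D) -> derivable L G (b :: D) ->
    derivable L G (And a b :: D)
| d_Land G D a b : derivable L (a :: b :: G) D -> derivable L (And a b :: G) D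
| d_Ror G D a b : derivable L G (a :: b :: D) -> derivable L G (Or a b :: D)
| d_Lor G D a b : derivable L (a :: G) D -> derivable L (b :: G) D ->
    derivable L (Or a b :: G) D
| d_Rimp G D a b : derivable L (a :: G) (b :: D) -> derivable L G (Imp a b :: D)
| d_Limp G D a b : derivable L G (a :: D) -> derivable L (b :: G) D ->
    derivable L (Imp a b :: G) D
| d_Rneg G D a : derivable L (a :: G) D -> derivable L G (Neg a :: D)
| d_Lneg G D a : derivable L G (a :: D) -> derivable L (Neg a :: G) D
| d_K (l : list (Grp * form)) (G : Grp) b Sig Om :
    derivable L (map snd l) [:: b] ->
    (forall x, In x l -> subgrp x.1 G) ->
    (forall f, In f Sig -> sigmaK G f) ->
    (forall f, In f Om -> omegaOK f) ->
    derivable L (Sig ++ map (fun x => Box x.1 x.2) l) (Box G b :: Om)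
| d_D (a : Agt) Gm Sig Om :
    L = LKD ->
    Gm <> nil ->
    derivable L Gm nil ->
    (forall f, In f Sig -> sigmaD a f) ->
    (forall f, In f Om -> omegaOK f) ->
    derivable L (Sig ++ map (Box (sgrp a)) Gm) Om
| d_T G D (H : Grp) a :
    L = LKT ->
    derivable L (Box H a :: a :: G) D -> derivable L (Box H a :: G) D.

Fixpoint sat (W : Type) (R : Grp -> W -> W -> Prop) (V : nat -> W -> Prop)
  (w : W) (f : form) : Prop :=
  match f with
  | Var p => V p w
  | Bot => False
  | And a b => sat R V w a /\ sat R V w b
  | Or a b => sat R V w a \/ sat R V w b
  | Imp a b => sat R V w a -> sat R V w b
  | Neg a => ~ sat R V w a
  | Box G a => forall v, R G w v -> sat R V v a
  end.

Definition monotone (W : Type) (R : Grp -> W -> W -> Prop) : Prop :=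
  forall G H : Grp, subgrp G H -> forall w v, R H w v -> R G w v.

Definition in_class (L : logic) (W : Type) (R : Grp -> W -> W -> Prop) : Prop :=
  match L with
  | LK => True
  | LKD => forall (a : Agt) (w : W), exists v, R (sgrp a) w v
  | LKT => forall (G : Grp) (w : W), R G w w
  end.

Definition seq_true (W : Type) (R : Grp -> W -> W -> Prop) (V : nat -> W -> Prop)
  (w : W) (Gm Dl : list form) : Prop :=
  (forall f, In f Gm -> sat R V w f) -> exists f, In f Dl /\ sat R V w f.

Definition valid_fin (L : logic) (Gm Dl : list form) : Prop :=
  forall (W : finType) (R : Grp -> W -> W -> Prop) (V : nat -> W -> Prop),
    monotone R -> in_class L R -> forall w : W, seq_true R V w Gm Dl.

End Defs.

From mathcomp Require Import all_boot.
From Stdlib Require Import List Permutation.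
From Stdlib Require Import Classical Lia.
From mathcomp Require Import zify.

Set Implicit Arguments. Unset Strict Implicit. Unset Printing Implicit Defensive.

(** Backward proof search. Compound formulas are decomposed on both sides by the invertible
    propositional rules, and every formula met on the branch is recorded; for KT, [a] is also
    added to the antecedent, once, for every [D_G a] in it. When only atoms and boxed formulas
    remain and no axiom, (D_K) or (D_D) applies, every (D_K) and (D_D) premise is underivable
    and built from strictly smaller formulas, so by induction on formula size it has a finite
    countermodel. Placing these countermodels below a fresh root (reflexive for KT) yields a
    finite model of the class whose root satisfies every recorded antecedent formula and
    falsifies every recorded succedent formula. *)

Lemma in_perm_cons (T : Type) (x : T) l : In x l -> exists l0, Permutation l (x :: l0).
Proof.
move=> /(in_split x l) [l1 [l2 ->]]; exists (l1 ++ l2).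
exact/Permutation_sym/Permutation_middle.
Qed.

Lemma forall_in_or (X : Type) (P : X -> Prop) (R : Prop) xs :
  (forall x, In x xs -> P x \/ R) -> (forall x, In x xs -> P x) \/ R.
Proof.
elim: xs => [|x xs IH] hxs; first by left.
case: (hxs x (or_introl erefl)) => [px|]; last by right.
case: IH => [y hy|all|]; [exact: hxs y (or_intror hy) | left | by right].
by move=> y [<-|/all].
Qed.

Lemma list_choice (X Y : Type) (R : X -> Y -> Prop) xs :
  (forall x, In x xs -> exists y, R x y) ->
  exists2 ys, (forall y, In y ys -> exists2 x, In x xs & R x y) &
    (forall x, In x xs -> exists2 y, In y ys & R x y).
Proof.
elim: xs => [|x xs IH] hxs; first by exists [::].
have [y rxy] := hxs x (or_introl erefl).
have [ys hys1 hys2] := IH (fun x' hx' => hxs x' (or_intror hx')).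
exists (y :: ys) => [y' [<-|/hys1 [x' hx' r]] | x' [<-|/hys2 [y' hy' r]]].
- by exists x => //; left.
- by exists x' => //; right.
- by exists y => //; left.
- by exists y' => //; right.
Qed.

Lemma In_mem (T : eqType) (x : T) s : x \in s -> In x s.
Proof. by elim: s => //= y s IH; rewrite inE => /orP [/eqP ->|/IH]; auto. Qed.

Section Completeness.
Variable Agt : finType.
Notation form := (form Agt).

Definition form_eq_dec (f g : form) : {f = g} + {f <> g}.
Proof. decide equality; [exact: PeanoNat.Nat.eq_dec | exact: eq_comparable]. Defined.

Fixpoint fsize (f : form) : nat :=
  match f with
  | Var _ | Bot => 1
  | And a b | Or a b | Imp a b => (fsize a + fsize b).+1
  | Neg a | Box _ a => (fsize a).+1
  end.

Definition fsizes (l : list form) : nat := fold_right (fun f s => fsize f + s) 0 l.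

Lemma fsizes_app l l' : fsizes (l ++ l') = fsizes l + fsizes l'.
Proof. by elim: l => //= f l ->; rewrite addnA. Qed.

Lemma fsizes_perm l l' : Permutation l l' -> fsizes l = fsizes l'.
Proof. by elim=> //= *; lia. Qed.

Definition imm_sub (f : form) : list form :=
  match f with
  | And a b | Or a b | Imp a b => [:: a; b]
  | Neg a | Box _ a => [:: a]
  | _ => [::]
  end.

Lemma imm_sub_ind (P : form -> Prop) :
  (forall f, (forall g, In g (imm_sub f) -> P g) -> P f) -> forall f, P f.
Proof.
move=> IH; elim=> [p||a Pa b Pb|a Pa b Pb|a Pa b Pb|a Pa|G a Pa]; apply: IH => //= g;
  by [case=> [<-|[<-|[]]] | case=> [<-|[]]].
Qed.

Lemma fsize_imm_sub f g : In g (imm_sub f) -> fsize g < fsize f.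
Proof. by case: f => [p||a b|a b|a b|a|G a] /=; intuition (subst; lia). Qed.

Fixpoint subformulas (f : form) : list form :=
  f :: match f with
       | And a b | Or a b | Imp a b => subformulas a ++ subformulas b
       | Neg a | Box _ a => subformulas a
       | _ => [::]
       end.

Lemma subformulasP f g :
  In g (subformulas f) <-> g = f \/ exists h, In h (imm_sub f) /\ In g (subformulas h).
Proof.
have -> : subformulas f = f :: flat_map subformulas (imm_sub f).
  by case: f => //= *; rewrite app_nil_r.
by rewrite -in_flat_map /=; split=> [[]|[]]; auto.
Qed.

Lemma subformulas_refl f : In f (subformulas f).
Proof. by apply/subformulasP; left. Qed.

Lemma subformulas_closed f g h :
  In g (subformulas f) -> In h (imm_sub g) -> In h (subformulas f).
Proof.
elim/imm_sub_ind: f => f IH /subformulasP [-> | [f' [hf' gf']]] hh; apply/subformulasP; right.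
- by exists h; split=> //; exact: subformulas_refl.
- by exists f'; split=> //; exact: IH gf' hh.
Qed.

Lemma fsize_subformulas f g : In g (subformulas f) -> fsize g <= fsize f.
Proof.
elim/imm_sub_ind: f => f IH /subformulasP [-> // | [h [hf /IH]]].
by move: (fsize_imm_sub hf) => /[swap] /(_ hf); lia.
Qed.

(* A premise [(X, Y)] of the rule for [f] stands for [X ++ Gm => Y ++ Dl], where
   [f :: Gm => Dl] (resp. [Gm => f :: Dl]) is the conclusion. *)
Definition left_premises (f : form) : list (list form * list form) :=
  match f with
  | And a b => [:: ([:: a; b], [::])]
  | Or a b => [:: ([:: a], [::]); ([:: b], [::])]
  | Imp a b => [:: ([::], [:: a]); ([:: b], [::])]
  | Neg a => [:: ([::], [:: a])]
  | _ => [::]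
  end.

Definition right_premises (f : form) : list (list form * list form) :=
  match f with
  | And a b => [:: ([::], [:: a]); ([::], [:: b])]
  | Or a b => [:: ([::], [:: a; b])]
  | Imp a b => [:: ([:: a], [:: b])]
  | Neg a => [:: ([:: a], [::])]
  | _ => [::]
  end.

Lemma premise_imm_sub f p : In p (left_premises f ++ right_premises f) ->
  incl (p.1 ++ p.2) (imm_sub f) /\ fsizes p.1 + fsizes p.2 < fsize f.
Proof.
case: f => [p'||a b|a b|a b|a|G a] //=; rewrite /incl /=;
  intuition (subst; simpl in *; intuition (subst; auto; lia)).
Qed.


Definition boxes_of (l : list form) : list (Grp Agt * form) :=
  flat_map (fun f => if f is Box H a then [:: (H, a)] else [::]) l.

Definition sub_boxes (G : Grp Agt) (l : list form) : list (Grp Agt * form) :=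
  filter (fun x => subgrp x.1 G) (boxes_of l).

Definition non_sub_boxes (G : Grp Agt) (l : list form) : list form :=
  filter (fun f => if f is Box H _ then ~~ subgrp H G else true) l.

Definition bodies G l : list form := map snd (sub_boxes G l).

Lemma in_boxes_of l x : In x (boxes_of l) <-> In (Box x.1 x.2) l.
Proof.
rewrite /boxes_of in_flat_map; split.
- by move=> [[p||a b|a b|a b|a|H a] [hf]] //= [<-|[]].
- by move=> hx; exists (Box x.1 x.2); case: x hx => /=; auto.
Qed.

Lemma in_sub_boxes G l x : In x (sub_boxes G l) <-> In (Box x.1 x.2) l /\ subgrp x.1 G.
Proof. by rewrite filter_In in_boxes_of. Qed.

Lemma in_bodies G l a : In a (bodies G l) <-> exists H, In (Box H a) l /\ subgrp H G.
Proof.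
rewrite /bodies in_map_iff; split.
- by move=> [x [<- /in_sub_boxes hx]]; exists x.1.
- by move=> [H hH]; exists (H, a); rewrite in_sub_boxes.
Qed.

Lemma perm_sub_boxes G l :
  Permutation l (non_sub_boxes G l ++ map (fun x => Box x.1 x.2) (sub_boxes G l)).
Proof.
rewrite /sub_boxes /boxes_of; elim: l => [|f l IH] //=.
case: f => [p||a b|a b|a b|a|H a] /=; try exact: perm_skip.
case: (subgrp H G) => /=; last exact: perm_skip.
exact: Permutation_cons_app.
Qed.

Section Rules.
Variable L : logic.

Lemma derivable_left_rule f Gm Dl : ~ omegaOK f ->
  (forall p, In p (left_premises f) -> derivable L (p.1 ++ Gm) (p.2 ++ Dl)) ->
  derivable L (f :: Gm) Dl.
Proof.
case: f => [p||a b|a b|a b|a|H a] //= _ prem.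
- exact: d_Land (prem ([:: a; b], [::]) (or_introl erefl)).
- exact: d_Lor (prem ([:: a], [::]) (or_introl erefl))
               (prem ([:: b], [::]) (or_intror (or_introl erefl))).
- exact: d_Limp (prem ([::], [:: a]) (or_introl erefl))
                (prem ([:: b], [::]) (or_intror (or_introl erefl))).
- exact: d_Lneg (prem ([::], [:: a]) (or_introl erefl)).
Qed.

Lemma derivable_right_rule f Gm Dl : ~ omegaOK f ->
  (forall p, In p (right_premises f) -> derivable L (p.1 ++ Gm) (p.2 ++ Dl)) ->
  derivable L Gm (f :: Dl).
Proof.
case: f => [p||a b|a b|a b|a|H a] //= _ prem.
- exact: d_Rand (prem ([::], [:: a]) (or_introl erefl))
                (prem ([::], [:: b]) (or_intror (or_introl erefl))).
- exact: d_Ror (prem ([::], [:: a; b]) (or_introl erefl)).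
- exact: d_Rimp (prem ([:: a], [:: b]) (or_introl erefl)).
- exact: d_Rneg (prem ([:: a], [::]) (or_introl erefl)).
Qed.

Lemma derivable_bot_in Gm Dl : In (Bot Agt) Gm -> derivable L Gm Dl.
Proof.
move=> hbot; have [Gm0 hGm] := in_perm_cons hbot.
exact: d_perm (d_bot _ _ _) (Permutation_sym hGm) (Permutation_refl _).
Qed.

Lemma derivable_id_in p Gm Dl : In (Var Agt p) Gm -> In (Var Agt p) Dl -> derivable L Gm Dl.
Proof.
move=> hG hD; have [Gm0 hGm] := in_perm_cons hG; have [Dl0 hDl] := in_perm_cons hD.
exact: d_perm (d_id _ _ _ _) (Permutation_sym hGm) (Permutation_sym hDl).
Qed.

Lemma non_sub_boxes_sigmaK G Gm : (forall f, In f Gm -> omegaOK f) ->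
  forall f, In f (non_sub_boxes G Gm) -> sigmaK G f.
Proof. by move=> omGm f /filter_In [/omGm]; case: f. Qed.

Lemma derivable_K_in G b Gm Dl :
  (forall f, In f Gm -> omegaOK f) -> (forall f, In f Dl -> omegaOK f) ->
  In (Box G b) Dl -> derivable L (bodies G Gm) [:: b] -> derivable L Gm Dl.
Proof.
move=> omGm omDl hbox hder; have [Dl0 hDl] := in_perm_cons hbox.
have omDl0 f : In f Dl0 -> omegaOK f.
  by move=> hf; apply: omDl; apply: Permutation_in (Permutation_sym hDl) _; right.
have hK := d_K hder (fun x hx => (proj1 (in_sub_boxes _ _ _) hx).2)
  (@non_sub_boxes_sigmaK G Gm omGm) omDl0.
exact: d_perm hK (Permutation_sym (perm_sub_boxes G Gm)) (Permutation_sym hDl).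
Qed.

Lemma sub_sgrp (H : Grp Agt) a : subgrp H (sgrp a) -> H = sgrp a.
Proof.
rewrite /subgrp subset1 => /orP [/eqP eH | /eqP eH]; first exact: val_inj.
by move: (valP H); rewrite eH eqxx.
Qed.

Lemma derivable_D_in a Gm Dl : L = LKD ->
  (forall f, In f Gm -> omegaOK f) -> (forall f, In f Dl -> omegaOK f) ->
  bodies (sgrp a) Gm <> [::] -> derivable L (bodies (sgrp a) Gm) [::] -> derivable L Gm Dl.
Proof.
move=> eL omGm omDl ne hder.
have sigD f : In f (non_sub_boxes (sgrp a) Gm) -> sigmaD a f.
  move/(non_sub_boxes_sigmaK omGm); case: f => //= H _ nsub eH.
  by move: nsub; rewrite /subgrp /= -eH subxx.
have hD := d_D eL ne hder sigD omDl.
apply: d_perm hD _ (Permutation_refl _); apply: Permutation_sym.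
have -> : map (Box (sgrp a)) (bodies (sgrp a) Gm) = map (fun x => Box x.1 x.2) (sub_boxes (sgrp a) Gm).
  rewrite /bodies map_map; apply: map_ext_in => x /in_sub_boxes [_ /sub_sgrp ->] //.
exact: perm_sub_boxes.
Qed.

Lemma derivable_T_in (H : Grp Agt) (a : form) Gm Dl : L = LKT ->
  In (Box H a) Gm -> derivable L (a :: Gm) Dl -> derivable L Gm Dl.
Proof.
move=> eL hbox hder; have [Gm0 hGm] := in_perm_cons hbox.
have hT : derivable L (Box H a :: a :: Gm0) Dl.
  apply: d_perm hder _ (Permutation_refl _).
  exact: Permutation_trans (perm_skip a hGm) (perm_swap _ _ _).
exact: d_perm (d_T eL hT) (Permutation_sym hGm) (Permutation_refl _).
Qed.

Lemma decompose_left f Gm Gm0 Dl (R : Prop) : Permutation Gm (f :: Gm0) -> ~ omegaOK f ->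
  (forall p, In p (left_premises f) -> derivable L (p.1 ++ Gm0) (p.2 ++ Dl) \/ R) ->
  derivable L Gm Dl \/ R.
Proof.
move=> hGm nf /forall_in_or [all|]; last by right.
by left; exact: d_perm (derivable_left_rule nf all) (Permutation_sym hGm) (Permutation_refl _).
Qed.

Lemma decompose_right f Gm Dl Dl0 (R : Prop) : Permutation Dl (f :: Dl0) -> ~ omegaOK f ->
  (forall p, In p (right_premises f) -> derivable L (p.1 ++ Gm) (p.2 ++ Dl0) \/ R) ->
  derivable L Gm Dl \/ R.
Proof.
move=> hDl nf /forall_in_or [all|]; last by right.
by left; exact: d_perm (derivable_right_rule nf all) (Permutation_refl _) (Permutation_sym hDl).
Qed.

End Rules.

(** * Models and gluing *)

Lemma sat_left_premise (W : Type) R V (w : W) f p : In p (left_premises f) ->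
  (forall g, In g p.1 -> sat R V w g) -> (forall g, In g p.2 -> ~ sat R V w g) -> sat R V w f.
Proof.
case: f => [p'||a b|a b|a b|a|H a] //=.
- by case=> [<-|[]] sG _; split; apply: sG; [left | right; left].
- by case=> [<-|[<-|[]]] sG _; [left | right]; apply: sG; left.
- case=> [<-|[<-|[]]] sG uD /=; first by move/(uD a (or_introl erefl)).
  by move=> _; apply: sG; left.
- by case=> [<-|[]] _ uD; exact: uD a (or_introl erefl).
Qed.

Lemma unsat_right_premise (W : Type) R V (w : W) f p : In p (right_premises f) ->
  (forall g, In g p.1 -> sat R V w g) -> (forall g, In g p.2 -> ~ sat R V w g) -> ~ sat R V w f.
Proof.
case: f => [p'||a b|a b|a b|a|H a] //=.
- case=> [<-|[<-|[]]] _ uD /= [ha hb]; first exact: uD a (or_introl erefl) ha.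
  exact: uD b (or_introl erefl) hb.
- by case=> [<-|[]] _ uD /= [/(uD a (or_introl erefl)) | /(uD b (or_intror (or_introl erefl)))].
- by case=> [<-|[]] sG uD /= /(_ (sG a (or_introl erefl))) /(uD b (or_introl erefl)).
- by case=> [<-|[]] sG _ /=; apply; apply: sG; left.
Qed.

Lemma sat_bounded_morphism (W1 W2 : Type) (R1 : Grp Agt -> W1 -> W1 -> Prop) V1
    (R2 : Grp Agt -> W2 -> W2 -> Prop) V2 (h : W1 -> W2) :
  (forall G x y, R1 G x y -> R2 G (h x) (h y)) ->
  (forall G x v, R2 G (h x) v -> exists2 y, v = h y & R1 G x y) ->
  (forall p x, V2 p (h x) <-> V1 p x) ->
  forall f x, sat R2 V2 (h x) f <-> sat R1 V1 x f.
Proof.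
move=> forth back hV; elim=> [p||a IHa b IHb|a IHa b IHb|a IHa b IHb|a IHa|G a IHa] x /=;
  rewrite ?IHa ?IHb //.
split=> hbox v.
- by move=> /(forth G) /hbox /IHa.
- by move=> /back [y -> /hbox /IHa].
Qed.

Record pmodel := PModel {
  pW : finType;
  pR : Grp Agt -> pW -> pW -> Prop;
  pV : nat -> pW -> Prop;
  proot : pW }.

Definition psat (M : pmodel) (f : form) : Prop := sat (@pR M) (@pV M) (proot M) f.

Definition admissible L (M : pmodel) : Prop := monotone (@pR M) /\ in_class L (@pR M).

Definition countermodel L (Gm Dl : list form) : Prop :=
  exists2 M, admissible L M &
    (forall f, In f Gm -> psat M f) /\ (forall f, In f Dl -> ~ psat M f).

Lemma countermodel_incl L Gm Dl Gm' Dl' :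
  incl Gm Gm' -> incl Dl Dl' -> countermodel L Gm' Dl' -> countermodel L Gm Dl.
Proof.
move=> sG sD [M adm [hG hD]]; exists M => //.
by split=> f hf; [exact: hG (sG f hf) | exact: hD (sD f hf)].
Qed.

Definition trivial_model : pmodel :=
  @PModel (unit : finType) (fun _ _ _ => True) (fun _ _ => False) tt.

Lemma trivial_model_admissible L : admissible L trivial_model.
Proof. by split=> //; case: L => //= a w; exists tt. Qed.

Section Gluing.
Implicit Types (cs : list (Grp Agt * pmodel)).

Fixpoint sumW cs : finType :=
  if cs is c :: cs' then ((pW c.2 + sumW cs')%type : finType) else void.

Fixpoint sumR cs : Grp Agt -> sumW cs -> sumW cs -> Prop :=
  match cs return Grp Agt -> sumW cs -> sumW cs -> Prop with
  | [::] => fun _ _ _ => False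
  | c :: cs' => fun G u v =>
      match u, v with
      | inl x, inl y => @pR c.2 G x y
      | inr x, inr y => @sumR cs' G x y
      | _, _ => False
      end
  end.

Fixpoint sumV cs : nat -> sumW cs -> Prop :=
  match cs return nat -> sumW cs -> Prop with
  | [::] => fun _ _ => False
  | c :: cs' => fun p u => match u with inl x => @pV c.2 p x | inr y => @sumV cs' p y end
  end.

(* The [G]-successors of the new root: the roots of the children whose label contains [G],
   which makes the glued relations antitone in the group. *)
Fixpoint sum_root cs : Grp Agt -> sumW cs -> Prop :=
  match cs return Grp Agt -> sumW cs -> Prop with
  | [::] => fun _ _ => False
  | c :: cs' => fun G u =>
      match u with inl x => subgrp G c.1 /\ x = proot c.2 | inr y => @sum_root cs' G y end
  end.

Definition sum_sat cs (u : sumW cs) (f : form) : Prop := sat (@sumR cs) (@sumV cs) u f.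

Lemma sum_sat_inl c cs (x : pW c.2) f : @sum_sat (c :: cs) (inl x) f <-> sat (@pR c.2) (@pV c.2) x f.
Proof. by apply: sat_bounded_morphism => // G x0 [y|y] //= r; exists y. Qed.

Lemma sum_sat_inr c cs (x : sumW cs) f : @sum_sat (c :: cs) (inr x) f <-> sum_sat x f.
Proof. by apply: sat_bounded_morphism => // G x0 [y|y] //= r; exists y. Qed.

Lemma sum_root_inv cs G (v : sumW cs) : sum_root G v ->
  exists2 c, In c cs & subgrp G c.1 /\ forall f, sum_sat v f <-> psat c.2 f.
Proof.
elim: cs v => [|c cs IH] //= [x [sG ->]|y /IH [c' hc' [sG hsat]]].
- by exists c; [left | split=> // f; exact: sum_sat_inl].
- by exists c'; [right | split=> // f; rewrite -hsat; exact: sum_sat_inr].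
Qed.

Lemma sum_root_of cs G c : In c cs -> subgrp G c.1 ->
  exists2 v : sumW cs, sum_root G v & forall f, sum_sat v f <-> psat c.2 f.
Proof.
elim: cs => [|c' cs IH] //= [-> sG | /IH hc /hc [v hv hsat]].
- by exists (inl (proot c.2)) => // f; exact: sum_sat_inl.
- by exists (inr v) => // f; rewrite -hsat; exact: sum_sat_inr.
Qed.

Lemma sum_root_anti cs G H (v : sumW cs) : subgrp G H -> sum_root H v -> sum_root G v.
Proof.
elim: cs v => [|c cs IH] //= [x|y] sGH; last exact: IH.
by move=> [sH ->]; split=> //; exact: subset_trans sGH sH.
Qed.

Lemma sumR_monotone cs : (forall c, In c cs -> monotone (@pR c.2)) -> monotone (@sumR cs).
Proof.
elim: cs => [|c cs IH] mon G H sGH; first by case.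
case=> [x|x] [y|y] //=; first exact: mon c (or_introl erefl) G H sGH x y.
by apply: IH sGH x y => c' hc'; apply: mon; right.
Qed.

Lemma sumR_in_class L cs : (forall c, In c cs -> in_class L (@pR c.2)) -> in_class L (@sumR cs).
Proof.
elim: cs => [|c cs IH] hcl; first by move: hcl; case: L => //= _ ? [].
have {}IH := IH (fun c' hc' => hcl c' (or_intror hc')).
have hc := hcl c (or_introl erefl).
move: hcl IH hc; case: L => //= _ IH hc.
- move=> a [x|y].
  + by have [v r] := hc a x; exists (inl v).
  + by have [v r] := IH a y; exists (inr v).
- by move=> G [x|y]; [exact: hc | exact: IH].
Qed.

Variables (cs : list (Grp Agt * pmodel)) (refl_root : Prop) (Vroot : nat -> Prop).

Definition glueR (G : Grp Agt) (u v : option (sumW cs)) : Prop :=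
  match u, v with
  | None, None => refl_root
  | None, Some y => sum_root G y
  | Some x, Some y => sumR G x y
  | Some _, None => False
  end.

Definition glueV (p : nat) (u : option (sumW cs)) : Prop :=
  if u is Some x then sumV p x else Vroot p.

Definition glue : pmodel := @PModel (option (sumW cs) : finType) glueR glueV None.

Lemma glue_sat_some (x : sumW cs) f : sat glueR glueV (Some x) f <-> sum_sat x f.
Proof. by apply: sat_bounded_morphism => // G x0 [y|] //= r; exists y. Qed.

Lemma psat_glue_box G a : psat glue (Box G a) <->
  (refl_root -> psat glue a) /\ (forall c, In c cs -> subgrp G c.1 -> psat c.2 a).
Proof.
split=> [hbox | [hroot hkids] [y|] /=].
- split=> [r | c hc sG]; first exact: hbox None r.
  have [v hv /(_ a) <-] := sum_root_of hc sG.
  by apply/glue_sat_some; apply: hbox (Some v) hv.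
- by move=> /sum_root_inv [c hc [sG /(_ a) hsat]]; apply/glue_sat_some/hsat/hkids.
- exact: hroot.
Qed.

Lemma glue_admissible L :
  (forall c, In c cs -> admissible L c.2) ->
  (L = LKD -> forall a, exists2 c, In c cs & c.1 = sgrp a) ->
  (L = LKT -> refl_root) ->
  admissible L glue.
Proof.
move=> adm ser refl.
have mon := sumR_monotone (fun c hc => (adm c hc).1).
have cl := sumR_in_class (fun c hc => (adm c hc).2).
split.
- move=> G H sGH [x|] [y|] //=; [exact: mon | exact: sum_root_anti].
- move: ser refl cl {adm}; case: L => //= ser refl cl.
  + move=> a [x|].
    * by have [y r] := cl a x; exists (Some y).
    * have [c hc ec] := ser erefl a.
      have sa : subgrp (sgrp a) c.1 by rewrite ec /subgrp subxx.
      have [v hv _] := sum_root_of hc sa.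
      by exists (Some v).
  + by move=> G [x|] /=; [exact: cl | exact: refl].
Qed.

End Gluing.

(** * Proof search *)

(* (D_T) keeps its principal formula; search applies it only when this adds a new formula of
   [Sub] to [HL], so the number of missing formulas decreases. *)
Definition missing (Sub HL : list form) : nat :=
  count (fun f => if in_dec form_eq_dec f HL then false else true) Sub.

Lemma missing_mono Sub HL HL' : incl HL HL' -> missing Sub HL' <= missing Sub HL.
Proof.
move=> sHL; apply: sub_count => f /=.
case: (in_dec form_eq_dec f HL') => // nf'.
by case: (in_dec form_eq_dec f HL) => // hf; case: nf'; apply: sHL.
Qed.

Lemma missing_lt Sub HL HL' a : incl HL HL' ->
  In a Sub -> ~ In a HL -> In a HL' -> missing Sub HL' < missing Sub HL.
Proof.
move=> sHL + naHL aHL'; rewrite /missing; elim: Sub => //= f Sub IH [->|hSub].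
- have := missing_mono Sub sHL; rewrite /missing.
  by case: (in_dec form_eq_dec a HL); case: (in_dec form_eq_dec a HL') => //; lia.
- have := IH hSub.
  case: (in_dec form_eq_dec f HL) => hf; case: (in_dec form_eq_dec f HL') => hf' //=; try lia.
  by case: hf'; apply: sHL.
Qed.

(* The rules delete their principal formulas, yet the countermodel must still decide them:
   [HL] and [HR] record every formula met on the left and on the right of the branch. *)
Definition decomposed_left (HL HR : list form) (f : form) : Prop :=
  exists2 p, In p (left_premises f) & incl p.1 HL /\ incl p.2 HR.

Definition decomposed_right (HL HR : list form) (f : form) : Prop :=
  exists2 p, In p (right_premises f) & incl p.1 HL /\ incl p.2 HR.

Definition history (Gm Dl HL HR : list form) : Prop :=
  [/\ incl Gm HL, incl Dl HR,
      forall f, In f HL -> In f Gm \/ decomposed_left HL HR f &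
      forall f, In f HR -> In f Dl \/ decomposed_right HL HR f].

Lemma history_extend Gm Dl HL HR Gm' Dl' X Y : history Gm Dl HL HR ->
  incl X Gm' -> incl Y Dl' -> incl Gm' (X ++ HL) -> incl Dl' (Y ++ HR) ->
  (forall f, In f Gm -> In f Gm' \/ decomposed_left (X ++ HL) (Y ++ HR) f) ->
  (forall f, In f Dl -> In f Dl' \/ decomposed_right (X ++ HL) (Y ++ HR) f) ->
  history Gm' Dl' (X ++ HL) (Y ++ HR).
Proof.
move=> [_ _ hHL hHR] sX sY sG sD hG hD; split=> // f; rewrite in_app_iff.
- case=> [/sX | /hHL [/hG // | [p hp [p1 p2]]]]; first by left.
  by right; exists p => //; split; [exact: incl_appr | exact: incl_appr].
- case=> [/sY | /hHR [/hD // | [p hp [p1 p2]]]]; first by left.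
  by right; exists p => //; split; [exact: incl_appr | exact: incl_appr].
Qed.

Lemma history_left_step Gm Dl HL HR f Gm0 p : history Gm Dl HL HR ->
  Permutation Gm (f :: Gm0) -> In p (left_premises f) ->
  history (p.1 ++ Gm0) (p.2 ++ Dl) (p.1 ++ HL) (p.2 ++ HR).
Proof.
move=> hist hGm hp; have [sG sD _ _] := hist.
have sGm0 : incl Gm0 Gm by move=> g hg; apply: Permutation_in (Permutation_sym hGm) _; right.
apply: history_extend hist _ _ _ _ _ _.
- exact: incl_appl (incl_refl _).
- exact: incl_appl (incl_refl _).
- exact: incl_app (incl_appl _ (incl_refl _)) (incl_appr _ (incl_tran sGm0 sG)).
- exact: incl_app (incl_appl _ (incl_refl _)) (incl_appr _ sD).
- move=> g /(Permutation_in _ hGm) [<-|hg]; last by left; apply: in_or_app; right.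
  by right; exists p => //; split; exact: incl_appl (incl_refl _).
- by move=> g hg; left; apply: in_or_app; right.
Qed.

Lemma history_right_step Gm Dl HL HR f Dl0 p : history Gm Dl HL HR ->
  Permutation Dl (f :: Dl0) -> In p (right_premises f) ->
  history (p.1 ++ Gm) (p.2 ++ Dl0) (p.1 ++ HL) (p.2 ++ HR).
Proof.
move=> hist hDl hp; have [sG sD _ _] := hist.
have sDl0 : incl Dl0 Dl by move=> g hg; apply: Permutation_in (Permutation_sym hDl) _; right.
apply: history_extend hist _ _ _ _ _ _.
- exact: incl_appl (incl_refl _).
- exact: incl_appl (incl_refl _).
- exact: incl_app (incl_appl _ (incl_refl _)) (incl_appr _ sG).
- exact: incl_app (incl_appl _ (incl_refl _)) (incl_appr _ (incl_tran sDl0 sD)).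
- by move=> g hg; left; apply: in_or_app; right.
- move=> g /(Permutation_in _ hDl) [<-|hg]; last by left; apply: in_or_app; right.
  by right; exists p => //; split; exact: incl_appl (incl_refl _).
Qed.

Lemma history_cons_left Gm Dl HL HR a : history Gm Dl HL HR -> history (a :: Gm) Dl (a :: HL) HR.
Proof.
move=> hist; have [sG sD _ _] := hist.
apply: (@history_extend _ _ _ _ _ _ [:: a] [::] hist) => //.
- by move=> g [<-|[]]; left.
- by move=> g /= [<-|/sG]; auto.
- by move=> g hg; left; right.
- by move=> g hg; left.
Qed.

Lemma glue_truth L Gm Dl HL HR cs :
  history Gm Dl HL HR ->
  (forall f, In f Gm -> omegaOK f) -> (forall f, In f Dl -> omegaOK f) ->
  ~ In (Bot Agt) Gm -> (forall p, In (Var Agt p) Gm -> ~ In (Var Agt p) Dl) ->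
  (L = LKT -> forall H a, In (Box H a) Gm -> In a HL) ->
  (forall c, In c cs -> forall f, In f (bodies c.1 Gm) -> psat c.2 f) ->
  (forall G b, In (Box G b) Dl -> exists2 c, In c cs & c.1 = G /\ ~ psat c.2 b) ->
  let M := glue cs (L = LKT) (fun p => In (Var Agt p) Gm) in
  forall f, (In f HL -> psat M f) /\ (In f HR -> ~ psat M f).
Proof.
move=> [_ _ hHL hHR] omG omD nbot nvar Tsat kids refute M.
elim/imm_sub_ind=> f IHf.
have IHp p : In p (left_premises f ++ right_premises f) -> incl p.1 HL -> incl p.2 HR ->
    (forall g, In g p.1 -> psat M g) /\ (forall g, In g p.2 -> ~ psat M g).
  move=> /premise_imm_sub [sub _] p1 p2.
  by split=> g hg; [apply: (IHf g _).1 (p1 g hg) | apply: (IHf g _).2 (p2 g hg)];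
    apply: sub; apply: in_or_app; auto.
split.
- move=> /hHL [inG | [p hp [p1 p2]]]; last first.
    have [s1 s2] := IHp p (in_or_app _ _ _ (or_introl hp)) p1 p2.
    exact: sat_left_premise hp s1 s2.
  move: IHf inG (omG f inG) {IHp}.
  case: f => [p||||||G a] // IHf inG _.
  apply/psat_glue_box; split=> [eT | c hc sGc].
  + exact: (IHf a (or_introl erefl)).1 (Tsat eT G a inG).
  + by apply: kids hc _ _; apply/in_bodies; exists G.
- move=> /hHR [inD | [p hp [p1 p2]]]; last first.
    have [s1 s2] := IHp p (in_or_app _ _ _ (or_intror hp)) p1 p2.
    exact: unsat_right_premise hp s1 s2.
  move: inD (omD f inD) {IHp IHf}.
  case: f => [p||||||G b] // inD _; [by move=> /nvar /(_ inD) | by [] |].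
  have [c hc [eG nb]] := refute G b inD.
  by move/psat_glue_box => [_ all]; apply: nb (all c hc _); rewrite eG /subgrp subxx.
Qed.

Lemma or_countermodel_incl L (Gm Dl HL HR HL' HR' : list form) : incl HL HL' -> incl HR HR' ->
  derivable L Gm Dl \/ countermodel L HL' HR' -> derivable L Gm Dl \/ countermodel L HL HR.
Proof. by move=> sL sR [|/(countermodel_incl sL sR)]; [left | right]. Qed.

Section Saturation.
Variables (L : logic) (n : nat) (Sub : list form).
Hypothesis IHsize : forall Gm Dl, (forall f, In f (Gm ++ Dl) -> fsize f < n) ->
  derivable L Gm Dl \/ countermodel L Gm Dl.
Hypothesis Sub_bounded : forall f, In f Sub -> fsize f <= n.
Hypothesis Sub_closed : forall f g, In f Sub -> In g (imm_sub f) -> In g Sub.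

Lemma fsize_bodies G Gm f : incl Gm Sub -> In f (bodies G Gm) -> fsize f < n.
Proof. by move=> sG /in_bodies [H [hH _]]; exact: Sub_bounded (sG _ hH). Qed.

Lemma refuting_child G b Gm Dl : incl Gm Sub -> incl Dl Sub ->
  (forall f, In f Gm -> omegaOK f) -> (forall f, In f Dl -> omegaOK f) ->
  ~ derivable L Gm Dl -> In (Box G b) Dl ->
  exists2 M, admissible L M & (forall f, In f (bodies G Gm) -> psat M f) /\ ~ psat M b.
Proof.
move=> sG sD omG omD nder hbox.
have bound f : In f (bodies G Gm ++ [:: b]) -> fsize f < n.
  rewrite in_app_iff => -[/(fsize_bodies sG) // | [<-|[]]].
  exact: Sub_bounded (sD _ hbox).
have [der | [M adm [hG hD]]] := IHsize bound.
- by case: nder; apply: derivable_K_in omG omD hbox der.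
- by exists M => //; split=> //; apply: hD; left.
Qed.

Lemma serial_child a Gm Dl : L = LKD -> incl Gm Sub ->
  (forall f, In f Gm -> omegaOK f) -> (forall f, In f Dl -> omegaOK f) ->
  ~ derivable L Gm Dl ->
  exists2 M, admissible L M & forall f, In f (bodies (sgrp a) Gm) -> psat M f.
Proof.
move=> eL sG omG omD nder.
case: (classic (bodies (sgrp a) Gm = [::])) => [-> | ne].
  by exists trivial_model; first exact: trivial_model_admissible.
have bound f : In f (bodies (sgrp a) Gm ++ [::]) -> fsize f < n.
  by rewrite cats0 => /(fsize_bodies sG).
have [der | [M adm [hG _]]] := IHsize bound.
- by case: nder; apply: derivable_D_in eL omG omD ne der.
- by exists M.
Qed.

Lemma leaf_countermodel Gm Dl HL HR : incl Gm Sub -> incl Dl Sub -> history Gm Dl HL HR ->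
  (forall f, In f Gm -> omegaOK f) -> (forall f, In f Dl -> omegaOK f) ->
  (L = LKT -> forall H a, In (Box H a) Gm -> In a HL) ->
  ~ derivable L Gm Dl -> countermodel L HL HR.
Proof.
move=> sG sD hist omG omD Tsat nder.
pose child_ok (c : Grp Agt * pmodel) :=
  admissible L c.2 /\ forall f, In f (bodies c.1 Gm) -> psat c.2 f.
have kidsK x : In x (boxes_of Dl) -> exists c, c.1 = x.1 /\ child_ok c /\ ~ psat c.2 x.2.
  case: x => G b /in_boxes_of /= hbox.
  by have [M adm [hM nb]] := refuting_child sG sD omG omD nder hbox; exists (G, M).
have kidsD a : In a (if L is LKD then enum Agt else [::]) -> exists c, c.1 = sgrp a /\ child_ok c.
  case eL: L => // _.
  by have [M adm hM] := serial_child a eL sG omG omD nder; exists (sgrp a, M).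
have [csK csK_ok csK_refute] := list_choice kidsK.
have [csD csD_ok csD_serial] := list_choice kidsD.
have cs_ok c : In c (csK ++ csD) -> child_ok c.
  by rewrite in_app_iff => -[/csK_ok [_ _ [_ [ok _]]] | /csD_ok [_ _ [_ ok]]].
have nbot : ~ In (Bot Agt) Gm by move=> hbot; apply: nder; exact: derivable_bot_in.
have nvar p : In (Var Agt p) Gm -> ~ In (Var Agt p) Dl.
  by move=> hG hD; apply: nder; exact: derivable_id_in hG hD.
have refute G b : In (Box G b) Dl -> exists2 c, In c (csK ++ csD) & c.1 = G /\ ~ psat c.2 b.
  move=> /(in_boxes_of Dl (G, b)) /csK_refute [c hc [eG [_ nb]]].
  by exists c; [apply: in_or_app; left | split].
have truth := glue_truth hist omG omD nbot nvar Tsat (fun c hc => (cs_ok c hc).2) refute.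
exists (glue (csK ++ csD) (L = LKT) (fun p => In (Var Agt p) Gm)).
- apply: glue_admissible => [c /cs_ok [] // | eL a | //].
  have ha : In a (if L is LKD then enum Agt else [::]) by rewrite eL; apply: In_mem; rewrite mem_enum.
  have [c hc [ec _]] := csD_serial a ha.
  by exists c => //; apply: in_or_app; right.
- by split=> f; [exact: (truth f).1 | exact: (truth f).2].
Qed.

Lemma premise_in_Sub f p : In f Sub -> In p (left_premises f ++ right_premises f) ->
  incl p.1 Sub /\ incl p.2 Sub.
Proof.
move=> hf /premise_imm_sub [sub _].
by split=> g hg; apply: Sub_closed hf _; apply: sub; apply: in_or_app; auto.
Qed.

Definition solvable_below (s m : nat) : Prop :=
  forall Gm Dl HL HR, fsizes Gm + fsizes Dl < s -> missing Sub HL <= m ->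
    incl Gm Sub -> incl Dl Sub -> history Gm Dl HL HR ->
    derivable L Gm Dl \/ countermodel L HL HR.

Lemma saturation_left_step Gm Dl HL HR f :
  solvable_below (fsizes Gm + fsizes Dl) (missing Sub HL) ->
  incl Gm Sub -> incl Dl Sub -> history Gm Dl HL HR -> In f Gm -> ~ omegaOK f ->
  derivable L Gm Dl \/ countermodel L HL HR.
Proof.
move=> rec sG sD hist hf nf; have [Gm0 hGm] := in_perm_cons hf.
apply: (decompose_left hGm nf) => p hp.
have hp' : In p (left_premises f ++ right_premises f) by apply: in_or_app; left.
have [s1 s2] := premise_in_Sub (sG f hf) hp'.
apply: or_countermodel_incl (incl_appr _ (incl_refl _)) (incl_appr _ (incl_refl _)) _.
apply: rec.
- by have := (premise_imm_sub hp').2; rewrite (fsizes_perm hGm) /= !fsizes_app; lia.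
- exact: missing_mono (incl_appr _ (incl_refl _)).
- apply: incl_app s1 (incl_tran _ sG) => g hg.
  by apply: Permutation_in (Permutation_sym hGm) _; right.
- exact: incl_app s2 sD.
- exact: history_left_step hist hGm hp.
Qed.

Lemma saturation_right_step Gm Dl HL HR f :
  solvable_below (fsizes Gm + fsizes Dl) (missing Sub HL) ->
  incl Gm Sub -> incl Dl Sub -> history Gm Dl HL HR -> In f Dl -> ~ omegaOK f ->
  derivable L Gm Dl \/ countermodel L HL HR.
Proof.
move=> rec sG sD hist hf nf; have [Dl0 hDl] := in_perm_cons hf.
apply: (decompose_right hDl nf) => p hp.
have hp' : In p (left_premises f ++ right_premises f) by apply: in_or_app; right.
have [s1 s2] := premise_in_Sub (sD f hf) hp'.
apply: or_countermodel_incl (incl_appr _ (incl_refl _)) (incl_appr _ (incl_refl _)) _.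
apply: rec.
- by have := (premise_imm_sub hp').2; rewrite (fsizes_perm hDl) /= !fsizes_app; lia.
- exact: missing_mono (incl_appr _ (incl_refl _)).
- exact: incl_app s1 sG.
- apply: incl_app s2 (incl_tran _ sD) => g hg.
  by apply: Permutation_in (Permutation_sym hDl) _; right.
- exact: history_right_step hist hDl hp.
Qed.

Lemma saturation Gm Dl HL HR : incl Gm Sub -> incl Dl Sub -> history Gm Dl HL HR ->
  derivable L Gm Dl \/ countermodel L HL HR.
Proof.
have [m] := ubnP (missing Sub HL); elim: m => // m IHm in Gm Dl HL HR *.
have [s] := ubnP (fsizes Gm + fsizes Dl); elim: s => // s IHs in Gm Dl HL HR *.
move=> hs hm sG sD hist.
have rec : solvable_below (fsizes Gm + fsizes Dl) (missing Sub HL).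
  by move=> Gm' Dl' HL' HR' hs' hm' *; apply: IHs => //; lia.
case: (classic (exists2 f, In f Gm & ~ omegaOK f)) => [[f hf nf] | compG].
  exact: saturation_left_step rec sG sD hist hf nf.
case: (classic (exists2 f, In f Dl & ~ omegaOK f)) => [[f hf nf] | compD].
  exact: saturation_right_step rec sG sD hist hf nf.
case: (classic (L = LKT /\ exists H a, In (Box H a) Gm /\ ~ In a HL)) => [[eL [H [a [hbox na]]]] | noT].
  have aSub : In a Sub by apply: Sub_closed (sG _ hbox) _; left.
  have [der | cm] : derivable L (a :: Gm) Dl \/ countermodel L (a :: HL) HR.
  - apply: IHm; last exact: history_cons_left.
    + exact: leq_trans (missing_lt (incl_tl _ (incl_refl _)) aSub na (or_introl erefl)) hm.
    + by move=> g [<-|/sG].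
    + exact: sD.
  - by left; apply: derivable_T_in eL hbox der.
  - by right; apply: countermodel_incl cm; [exact: incl_tl | exact: incl_refl].
case: (classic (derivable L Gm Dl)) => [der | nder]; [by left | right].
apply: leaf_countermodel sG sD hist _ _ _ nder.
- by move=> f hf; apply: NNPP => nf; apply: compG; exists f.
- by move=> f hf; apply: NNPP => nf; apply: compD; exists f.
- move=> eL H a hbox; apply: NNPP => na; apply: noT; split=> //; by exists H, a.
Qed.

End Saturation.

Lemma history_refl Gm Dl : history Gm Dl Gm Dl.
Proof. by split=> // f hf; left. Qed.

Lemma fsize_le_fsizes f l : In f l -> fsize f <= fsizes l.
Proof. by elim: l => //= g l IH [->|/IH]; lia. Qed.

Theorem derivable_or_countermodel L Gm Dl : derivable L Gm Dl \/ countermodel L Gm Dl.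
Proof.
suff bounded n Gm' Dl' : (forall f, In f (Gm' ++ Dl') -> fsize f < n) ->
    derivable L Gm' Dl' \/ countermodel L Gm' Dl'.
  apply: (bounded (fsizes Gm + fsizes Dl).+1) => f.
  by rewrite in_app_iff => -[/fsize_le_fsizes | /fsize_le_fsizes]; lia.
elim: n Gm' Dl' => [|n IH] Gm' Dl' hn.
  right; exists trivial_model; first exact: trivial_model_admissible.
  by split=> f hf; [move: (hn f (in_or_app _ _ _ (or_introl hf)))
                  | move: (hn f (in_or_app _ _ _ (or_intror hf)))].
pose Sub := flat_map subformulas (Gm' ++ Dl').
have sub f : In f (Gm' ++ Dl') -> In f Sub.
  by move=> hf; apply/in_flat_map; exists f; split=> //; exact: subformulas_refl.
apply: (@saturation L n Sub IH) (history_refl Gm' Dl').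
- move=> f /in_flat_map [g [/hn hg /fsize_subformulas]]; lia.
- move=> f g /in_flat_map [h [hh hf]] hg; apply/in_flat_map.
  by exists h; split=> //; exact: subformulas_closed hf hg.
- by move=> f hf; apply: sub; apply: in_or_app; left.
- by move=> f hf; apply: sub; apply: in_or_app; right.
Qed.

End Completeness.

Theorem theorem4p8 (Agt : finType) (Hne : 0 < #|Agt|) (L : logic)
  (Gm Dl : list (form Agt)) :
  valid_fin L Gm Dl -> derivable L Gm Dl.
Proof.
(* No agent is ever needed, so [Hne] is unused. *)
move=> valid; case: (derivable_or_countermodel L Gm Dl) => // -[M [mon cls] [hG hD]].
by have [f [hf sf]] := valid _ _ (@pV _ M) mon cls (proot M) hG; case: (hD f hf).
Qed.
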